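(* Fix $b\in\mathbb{N}$ and integers $M\ge2$, $N\ge2$. Let $P$ be the $b$-pattern on the rectangle with vertices $(1,1),(M,1),(M,N),(1,N)$ in which every boundary point (i.e. every point of $\{(1,s),(M,s),(r,1),(r,N): 1\le r\le M,\ 1\le s\le N\}$) is a circle and every interior point $(r,s)$ with $1<r<M$, $1<s<N$ is a cross. For $b=1$, $P$ is realizable in $L$ if and only if $M$ and $N$ are both odd. For $b\ge2$, $P$ is realizable in $L$ if and only if $M$ is odd or $N<2^b$. In particular, there are arbitrarily large rectangular regions of $b$-invisible points whose boundary consists of $b$-visible points.
   Context: $L=\mathbb{N}\times\mathbb{N}$. For $r,s\in\mathbb{N}$, $\gcd_b(r,s)=\max\{k\in\mathbb{N} : k\mid r \text{ and } k^b\mid s\}$; $(r,s)$ is $b$-visible if $\gcd_b(r,s)=1$ and $b$-invisible otherwise. A $b$-pattern is obtained by choosing a positive integer $w$ and assigning to each $(r,s)\in L$ with $1\le r\le w$, $1\le s\le w^b$ a cross, a circle, or neither. It is realizable in $L$ if there is $(u,v)\in L$ such that $(u+r,v+s)$ is $b$-visible for every circle $(r,s)$ and $b$-invisible for every cross $(r,s)$. *)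

(* Convention: the paper's N is the positive integers {1,2,...}. *)
From mathcomp Require Import all_boot.
Set Implicit Arguments. Unset Strict Implicit. Unset Printing Implicit Defensive.

(* gcd_b(r,s) = max { k : k | r and k^b | s }, for r >= 1 (then k <= r). *)
Definition gcdb (b r s : nat) : nat :=
  \max_(k < r.+1 | (k %| r) && (k ^ b %| s)) k.

Definition bvisible (b r s : nat) : bool := gcdb b r s == 1.
Definition binvisible (b r s : nat) : bool := gcdb b r s != 1.

Inductive mark := Cross | Circle | Blank.

(* A b-pattern: a width w and an assignment of marks; only points
   1 <= r <= w, 1 <= s <= w^b are relevant. *)
Record bpattern := BPattern { pw : nat; pmark : nat -> nat -> mark }.

Definition in_box (b : nat) (P : bpattern) (r s : nat) : Prop :=
  1 <= r <= pw P /\ 1 <= s <= pw P ^ b.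

(* Realizable in L = N x N (N positive): exists (u,v), u,v >= 1. *)
Definition realizable (b : nat) (P : bpattern) : Prop :=
  exists u v : nat, 1 <= u /\ 1 <= v /\
    forall r s, in_box b P r s ->
      (pmark P r s = Circle -> bvisible b (u + r) (v + s)) /\
      (pmark P r s = Cross -> binvisible b (u + r) (v + s)).

(* The rectangle pattern: boundary points circles, interior points crosses,
   everything else blank. Width w = maxn M N (so the box contains the
   rectangle when b >= 1). *)
Definition rect_mark (M N r s : nat) : mark :=
  if (1 <= r <= M) && (1 <= s <= N) then
    if (r == 1) || (r == M) || (s == 1) || (s == N) then Circle else Cross
  else Blank.

Definition rect_pattern (M N : nat) : bpattern :=
  BPattern (maxn M N) (rect_mark M N).

From mathcomp Require Import all_boot zify.
Set Implicit Arguments. Unset Strict Implicit. Unset Printing Implicit Defensive.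

(* Necessity is a parity argument: some s in [1, N] has 2^b | v + s once
   2^b <= N, so the circles (1, s) and (M, s) force u + 1 and u + M to be odd,
   i.e. M odd; for b = 1 the same argument along a row forces N odd.
   Sufficiency is a Chinese remainder construction: each interior point (r, s)
   gets its own prime p > M + N with p | u + r and p^b | v + s; u and v are
   fixed modulo the primes q <= M + N so that no such q hits the boundary; and
   v is made divisible by every other large prime dividing some u + r.  A large
   prime dividing u + r and u + r' with r, r' <= M forces r = r' (and likewise
   for s), so it is invisible only at its own interior point. *)

Lemma bvisibleP b x y : 0 < x ->
  reflect (forall p, prime p -> p %| x -> ~~ (p ^ b %| y)) (bvisible b x y).
Proof.
move=> x_gt0; rewrite /bvisible /gcdb.
apply: (iffP eqP) => [gcdb1 p p_pr p_x | no_p].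
  apply/negP => p_y; have p_le_x : p < x.+1 by rewrite ltnS dvdn_leq.
  have := @leq_bigmax_cond _ (fun k : 'I_x.+1 => (k %| x) && (k ^ b %| y))
    val (Ordinal p_le_x); rewrite /= p_x p_y gcdb1 => /(_ isT).
  by rewrite leqNgt prime_gt1.
apply/eqP; rewrite eqn_leq; apply/andP; split; last first.
  apply: (@leq_bigmax_cond _ _ val (Ordinal (x_gt0 : 1 < x.+1))).
  by rewrite /= dvd1n exp1n dvd1n.
apply/bigmax_leqP => k /andP[k_x k_y]; rewrite leqNgt; apply/negP => k_gt1.
have := no_p _ (pdiv_prime k_gt1) (dvdn_trans (pdiv_dvd k) k_x).
by rewrite (dvdn_trans (dvdn_exp2r _ (pdiv_dvd k)) k_y).
Qed.

Lemma leq_self_pexp m n : 0 < m -> 0 < n -> m <= m ^ n.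
Proof. by move=> m_gt0 n_gt0; rewrite -{1}(expn1 m) leq_pexp2l. Qed.

Lemma dvdn_congD d a c n : a = c %[mod d] -> (d %| a + n) = (d %| c + n).
Proof. by move=> ac; rewrite /dvdn -modnDml ac modnDml. Qed.

Lemma dvdn_add_inj p a x y : p %| a + x -> p %| a + y -> x < p -> y < p -> x = y.
Proof.
move=> /eqP ax /eqP ay xp yp; rewrite -(modn_small xp) -(modn_small yp).
by apply/eqP; rewrite -(eqn_modDl a) ax ay.
Qed.

Lemma exists_dvdn_add d v n : 0 < d <= n -> exists2 s, 0 < s <= n & d %| v + s.
Proof.
case/andP=> d_gt0 dn; have := ltn_pmod v d_gt0; exists (d - v %% d); first lia.
by rewrite (_ : v + _ = (v %/ d).+1 * d) ?dvdn_mull //; rewrite {1}(divn_eq v d); lia.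
Qed.

Lemma chinese_seq (T : eqType) (s : seq T) (m c : T -> nat) :
  {in s, forall i, 0 < m i} ->
  {in s &, forall i j, i != j -> coprime (m i) (m j)} ->
  exists2 x, 0 < x & {in s, forall i, x = c i %[mod m i]}.
Proof.
elim: s => [|i s IHs] m_gt0 m_coprime; first by exists 1.
have s_sub : {subset s <= i :: s} by move=> j js; rewrite inE js orbT.
have [x x_gt0 x_mod] := IHs (sub_in1 s_sub m_gt0) (sub_in2 s_sub m_coprime).
have [i_s | i_notin_s] := boolP (i \in s).
  by exists x => // j; rewrite inE => /predU1P[->|]; apply: x_mod.
pose P := \prod_(j <- s) m j.
have P_gt0 : 0 < P by rewrite /P big_seq prodn_cond_gt0 // => j /s_sub/m_gt0.
have i_coprime_P : coprime (m i) P.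
  rewrite /P big_seq; elim/big_ind: _ => [|a b|j js]; first exact: coprimen1.
    by rewrite coprimeMr => ->.
  by apply: m_coprime; rewrite ?mem_head ?s_sub //; apply: contraNneq i_notin_s => ->.
exists (chinese (m i) P (c i) x + m i * P).
  by rewrite addn_gt0 muln_gt0 m_gt0 ?mem_head ?P_gt0 ?orbT.
move=> j; rewrite inE => /predU1P[->|js].
  by rewrite mulnC addnC modnMDl chinese_modl.
have j_dvd_P : m j %| P by rewrite /P (big_rem j) //= dvdn_mulr.
rewrite -(modn_dvdm _ j_dvd_P) addnC modnMDl chinese_modr // modn_dvdm //.
exact: x_mod.
Qed.

Lemma chinese_prime_powers (T : eqType) (s : seq T) (p c : T -> nat) e :
  {in s, forall i, prime (p i)} -> {in s &, injective p} ->
  exists2 x, 0 < x & {in s, forall i, x = c i %[mod p i ^ e]}.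
Proof.
move=> p_prime p_inj; apply: chinese_seq => [i /p_prime/prime_gt0 p_gt0 | i j i_s j_s].
  by rewrite expn_gt0 p_gt0.
move=> ij; case: e => [|e]; first exact: coprimen1.
rewrite coprime_pexpl // coprime_pexpr // prime_coprime ?p_prime // dvdn_prime2 ?p_prime //.
by apply: contra ij => /eqP/p_inj ->.
Qed.

Definition next_prime (n : nat) : nat := s2val (prime_above n).

Lemma next_prime_gt n : n < next_prime n.
Proof. exact: s2valP (prime_above n). Qed.

Definition prime_chain (L k : nat) : nat := iter k.+1 next_prime L.

Lemma prime_chain_prime L k : prime (prime_chain L k).
Proof. exact: s2valP' (prime_above _). Qed.

Lemma prime_chain_increasing L : {homo prime_chain L : i j / i < j}.
Proof. exact: homo_ltn ltn_trans (fun k => next_prime_gt _). Qed.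

Lemma prime_chain_gt L k : L < prime_chain L k.
Proof.
case: k => [|k]; first exact: next_prime_gt.
exact: ltn_trans (next_prime_gt L) (prime_chain_increasing L (ltn0Sn k)).
Qed.

Lemma prime_chain_inj L : injective (prime_chain L).
Proof. exact: incn_inj (leq_mono (prime_chain_increasing L)). Qed.

Definition realizes (b : nat) (P : bpattern) (u v : nat) : Prop :=
  forall r s, in_box b P r s ->
    (pmark P r s = Circle -> bvisible b (u + r) (v + s)) /\
    (pmark P r s = Cross -> binvisible b (u + r) (v + s)).

Lemma in_box_rect b M N r s : 0 < b -> 0 < r <= M -> 0 < s <= N ->
  in_box b (rect_pattern M N) r s.
Proof.
move=> b_gt0 hr hs; rewrite /in_box /=.
have w_gt0 : 0 < maxn M N by rewrite leq_max; lia.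
have := leq_self_pexp w_gt0 b_gt0; lia.
Qed.

Lemma realizes_rect b M N u v : 0 < b ->
  realizes b (rect_pattern M N) u v <->
  (forall r s, 0 < r <= M -> 0 < s <= N ->
     (r == 1) || (r == M) || (s == 1) || (s == N) -> bvisible b (u + r) (v + s)) /\
  (forall r s, 1 < r < M -> 1 < s < N -> binvisible b (u + r) (v + s)).
Proof.
move=> b_gt0; split=> [realized | [boundary interior] r s _]; first split.
- move=> r s hr hs side.
  by apply: (realized r s (in_box_rect b_gt0 hr hs)).1; rewrite /= /rect_mark hr hs side.
- move=> r s hr hs; have hr' : 0 < r <= M by lia.
  have hs' : 0 < s <= N by lia.
  apply: (realized r s (in_box_rect b_gt0 hr' hs')).2.
  by rewrite /= /rect_mark hr' hs' /=; case: ifP => //; lia.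
rewrite /= /rect_mark; case: ifP => [/andP[hr hs]|//].
case: ifP => side; split=> // _; first exact: boundary.
by apply: interior; lia.
Qed.

Lemma realizes_rect_boundary_odd b M N u v r s : 0 < b ->
  realizes b (rect_pattern M N) u v -> 0 < r <= M -> 0 < s <= N ->
  (r == 1) || (r == M) || (s == 1) || (s == N) -> 2 %| u + r -> ~~ (2 ^ b %| v + s).
Proof.
move=> b_gt0 /(realizes_rect _ _ _ _ b_gt0)[boundary _] hr hs side.
have ur_gt0 : 0 < u + r by lia.
by move/(bvisibleP _ _ ur_gt0): (boundary r s hr hs side) => /(_ 2 isT).
Qed.

Lemma realizes_rect_odd_M b M N u v : 0 < b -> 1 < M -> 2 ^ b <= N ->
  realizes b (rect_pattern M N) u v -> odd M.
Proof.
move=> b_gt0 M_gt1 N_ge realized.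
have [s hs dvd_s] : exists2 s, 0 < s <= N & 2 ^ b %| v + s.
  by apply: exists_dvdn_add; rewrite expn_gt0 N_ge.
have odd_side r : (r == 1) || (r == M) -> odd (u + r).
  move=> side; apply: contraT; rewrite -dvdn2 => even_r.
  have hr : 0 < r <= M by case/orP: side => /eqP->; lia.
  move: (realizes_rect_boundary_odd b_gt0 realized hr hs).
  by rewrite side dvd_s => /(_ isT even_r).
have := odd_side 1 isT; have := odd_side M; rewrite eqxx orbT !oddD => /(_ isT).
by case: (odd u).
Qed.

Lemma realizes_rect1_odd_N M N u v : 1 < M -> 1 < N ->
  realizes 1 (rect_pattern M N) u v -> odd N.
Proof.
move=> M_gt1 N_gt1 realized.
have [r hr dvd_r] : exists2 r, 0 < r <= M & 2 %| u + r by apply: exists_dvdn_add; lia.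
have odd_side s : (s == 1) || (s == N) -> odd (v + s).
  move=> side; have hs : 0 < s <= N by case/orP: side => /eqP->; lia.
  move: (realizes_rect_boundary_odd (isT : 0 < 1) realized hr hs).
  rewrite expn1 dvd_r dvdn2 negbK.
  by apply=> //; case/orP: side => ->; rewrite !orbT.
have := odd_side 1 isT; have := odd_side N; rewrite eqxx orbT !oddD => /(_ isT).
by case: (odd v).
Qed.

Section RectangleConstruction.

Variables b M N : nat.
Hypotheses (b_gt0 : 0 < b) (M_gt1 : 1 < M) (N_gt1 : 1 < N).
Hypothesis even_M_small_N : ~~ odd M -> N < 2 ^ b.
Hypothesis b1_odd_N : b = 1 -> odd N.

(* Modulo a small prime q these residues make u avoid -1 and -M, except -M
   when q = 2 and M is even, and make v avoid -1 and -N modulo q ^ b, except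
   -1 when q ^ b = 2 divides N; the two hypotheses on N neutralize the
   exceptions. *)
Lemma small_prime_col q u : prime q -> u = ((2 < q) && (q %| M)) %[mod q] ->
  ~~ (q %| u + 1) /\ (q %| u + M -> q = 2 /\ ~~ odd M).
Proof.
move=> q_pr u_mod; rewrite !(dvdn_congD _ u_mod); have q_gt1 := prime_gt1 q_pr.
have [q_gt2 | q_le2] := ltnP 2 q; last first.
  have -> : q = 2 by lia.
  by rewrite /= !add0n dvdn2 /=.
have [q_M | q_notM] /= := boolP (q %| M).
  by rewrite gtnNdvd // addnC dvdn_addr // dvdn1; split=> //; lia.
by rewrite !add0n dvdn1 (negPf q_notM); split=> //; lia.
Qed.

Lemma small_prime_row q v : prime q -> v = (q ^ b %| N) %[mod q ^ b] ->
  ~~ (q ^ b %| v + 1) /\ ~~ (q ^ b %| v + N).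
Proof.
move=> q_pr v_mod; rewrite !(dvdn_congD _ v_mod).
have qb_gt1 : 1 < q ^ b by rewrite -(expn0 q) ltn_exp2l ?prime_gt1.
have [qb_N | qb_notN] /= := boolP (q ^ b %| N); last first.
  by rewrite !add0n dvdn1 (negPf qb_notN); split=> //; lia.
split; last by rewrite addnC dvdn_addr // dvdn1; lia.
apply/negP => qb_2; have q2 : q = 2.
  apply/eqP; rewrite -dvdn_prime2 //.
  exact: dvdn_trans (dvdn_exp b_gt0 (dvdnn q)) qb_2.
move: qb_2 qb_N; rewrite q2 -[X in _ %| X -> _](expn1 2) dvdn_Pexp2l // => b_le1.
have b1 : b = 1 by lia.
by rewrite b1 expn1 dvdn2 b1_odd_N.
Qed.

Lemma small_prime_boundary q u v r s : prime q ->
  u = ((2 < q) && (q %| M)) %[mod q] -> v = (q ^ b %| N) %[mod q ^ b] ->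
  0 < r <= M -> 0 < s <= N -> (r == 1) || (r == M) || (s == 1) || (s == N) ->
  q %| u + r -> ~~ (q ^ b %| v + s).
Proof.
move=> q_pr u_mod v_mod hr hs side q_ur.
have [col_1 col_M] := small_prime_col q_pr u_mod.
have [row_1 row_N] := small_prime_row q_pr v_mod.
have [r1 | r_ne1] := eqVneq r 1; first by rewrite -r1 q_ur in col_1.
have [rM | r_neM] := eqVneq r M.
  move: q_ur; rewrite rM => /col_M[q2 /even_M_small_N N_small]; subst q.
  rewrite (dvdn_congD _ v_mod) (gtnNdvd (ltnW N_gt1) N_small) /=.
  by rewrite gtnNdvd //; clear -hs N_small; lia.
by move: side; rewrite (negPf r_ne1) (negPf r_neM) => /orP[] /eqP ->.
Qed.

Lemma realizes_rect_of_residues u v : 0 < u ->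
  (forall q, prime q -> q <= M + N -> u = ((2 < q) && (q %| M)) %[mod q]) ->
  (forall q, prime q -> q <= M + N -> v = (q ^ b %| N) %[mod q ^ b]) ->
  (forall r s, 1 < r < M -> 1 < s < N ->
     exists2 q, prime q & (q %| u + r) && (q ^ b %| v + s)) ->
  (forall q r, prime q -> M + N < q -> 0 < r <= M -> q %| u + r ->
     q %| v \/ exists r' s', [/\ 1 < r' < M, 1 < s' < N, q %| u + r' & q %| v + s']) ->
  realizes b (rect_pattern M N) u v.
Proof.
move=> u_gt0 u_small v_small interior large; apply/realizes_rect => //; split.
  move=> r s hr hs side; have ur_gt0 : 0 < u + r by lia.
  apply/(bvisibleP _ _ ur_gt0) => q q_pr q_ur.
  have [q_small | q_large] := leqP q (M + N).
    by apply: small_prime_boundary q_pr (u_small q q_pr q_small)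
      (v_small q q_pr q_small) hr hs side q_ur.
  apply/negP => /(dvdn_trans (dvdn_exp b_gt0 (dvdnn q))) q_vs.
  have [q_v | [r' [s' [hr' hs' q_ur' q_vs']]]] := large q r q_pr q_large hr q_ur.
    by move: q_vs; rewrite dvdn_addr // gtnNdvd //; clear -hs q_large; lia.
  have r'r : r' = r.
    by move: (dvdn_add_inj q_ur' q_ur); apply; clear -hr hr' q_large; lia.
  have s's : s' = s.
    by move: (dvdn_add_inj q_vs' q_vs); apply; clear -hs hs' q_large; lia.
  by move: side; rewrite -r'r -s's; clear -hr' hs'; lia.
move=> r s hr hs; have [q q_pr /andP[q_ur qb_vs]] := interior r s hr hs.
have ur_gt0 : 0 < u + r by lia.
by apply/(bvisibleP _ _ ur_gt0) => /(_ q q_pr q_ur); rewrite qb_vs.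
Qed.

Definition rect_interior : seq (nat * nat) :=
  [seq (r, s) | r <- iota 2 (M - 2), s <- iota 2 (N - 2)].

Lemma mem_rect_interior r s : ((r, s) \in rect_interior) = (1 < r < M) && (1 < s < N).
Proof.
apply/allpairsP/andP => [[[r' s'] [/= hr' hs' [-> ->]]] | [hr hs]].
  by move: hr' hs'; rewrite !mem_iota; lia.
by exists (r, s); rewrite /= !mem_iota; split=> //; lia.
Qed.

Definition interior_prime (rs : nat * nat) : nat := prime_chain (M + N) (pickle rs).

Definition small_primes : seq nat := [seq q <- iota 0 (M + N).+1 | prime q].

Lemma mem_small_primes q : (q \in small_primes) = prime q && (q <= M + N).
Proof. by rewrite mem_filter mem_iota ltnS. Qed.

(* The congruences defining u and v are indexed by sites: [inl q] stands for
   the prime q itself and [inr (r, s)] for the prime of the interior point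
   (r, s); admissible sites carry pairwise distinct primes. *)
Definition site_prime (i : nat + nat * nat) : nat :=
  match i with inl q => q | inr rs => interior_prime rs end.

Definition admissible_site (i : nat + nat * nat) : bool :=
  match i with
  | inl q => prime q && ((q <= M + N) || (q \notin map interior_prime rect_interior))
  | inr rs => rs \in rect_interior
  end.

Lemma site_prime_prime : {in admissible_site, forall i, prime (site_prime i)}.
Proof. by move=> [q /andP[]|rs _] //; apply: prime_chain_prime. Qed.

Lemma site_prime_inj : {in admissible_site &, injective site_prime}.
Proof.
have mixed q rs : admissible_site (inl q) -> admissible_site (inr rs) ->
    q != interior_prime rs.
  move=> /andP[_ /orP[q_small | /negP q_new]] rs_in; apply/eqP => q_rs.
    by move: q_small; rewrite q_rs leqNgt prime_chain_gt.
  by apply: q_new; rewrite q_rs map_f.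
move=> [q|rs] [q'|rs'] adm adm' /= => [-> // | | | /prime_chain_inj/(pcan_inj pickleK) -> //].
  by move=> q_rs; move: (mixed _ _ adm adm'); rewrite q_rs eqxx.
by move=> rs_q; move: (mixed _ _ adm' adm); rewrite rs_q eqxx.
Qed.

Definition u_sites : seq (nat + nat * nat) := map inl small_primes ++ map inr rect_interior.

Lemma u_sites_admissible : {subset u_sites <= admissible_site}.
Proof.
move=> i; rewrite mem_cat => /orP[] /mapP[x x_in ->] //=.
by move: x_in; rewrite mem_small_primes unfold_in /= => /andP[-> ->].
Qed.

Definition u_residue (i : nat + nat * nat) : nat :=
  match i with inl q => (2 < q) && (q %| M) | inr rs => interior_prime rs - rs.1 end.

Lemma exists_u : exists u, [/\ 0 < u,
  forall q, prime q -> q <= M + N -> u = ((2 < q) && (q %| M)) %[mod q] &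
  forall r s, 1 < r < M -> 1 < s < N -> interior_prime (r, s) %| u + r].
Proof.
have [u u_gt0 u_mod] := chinese_prime_powers u_residue 1
  (sub_in1 u_sites_admissible site_prime_prime) (sub_in2 u_sites_admissible site_prime_inj).
exists u; split=> // [q q_pr q_small | r s hr hs].
  have := u_mod (inl q); rewrite expn1; apply.
  by rewrite mem_cat map_f ?mem_small_primes ?q_pr.
have := u_mod (inr (r, s)); rewrite /= expn1 => /(_ _)/dvdn_congD ->.
  by rewrite subnK //; apply: ltnW; apply: leq_trans (prime_chain_gt _ _); lia.
by rewrite mem_cat orbC map_f ?mem_rect_interior ?hr.
Qed.

Definition v_sites (u : nat) : seq (nat + nat * nat) := u_sites ++
  map inl [seq q <- primes (\prod_(r <- iota 1 M) (u + r))
          | q \notin map interior_prime rect_interior].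

Lemma v_sites_admissible u : {subset v_sites u <= admissible_site}.
Proof.
move=> i; rewrite mem_cat => /orP[/u_sites_admissible // | /mapP[q q_in ->]].
move: q_in; rewrite mem_filter mem_primes => /and4P[q_new q_pr _ _].
by rewrite unfold_in /= q_pr; apply/orP; right.
Qed.

Definition v_residue (i : nat + nat * nat) : nat :=
  match i with inl q => q ^ b %| N | inr rs => interior_prime rs ^ b - rs.2 end.

Lemma exists_v u : exists v, [/\ 0 < v,
  forall q, prime q -> q <= M + N -> v = (q ^ b %| N) %[mod q ^ b],
  forall r s, 1 < r < M -> 1 < s < N -> interior_prime (r, s) ^ b %| v + s &
  forall q, prime q -> M + N < q -> q %| \prod_(r <- iota 1 M) (u + r) ->
    q \notin map interior_prime rect_interior -> q %| v].
Proof.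
have [v v_gt0 v_mod] := chinese_prime_powers v_residue b
  (sub_in1 (@v_sites_admissible u) site_prime_prime)
  (sub_in2 (@v_sites_admissible u) site_prime_inj).
exists v; split=> // [q q_pr q_small | r s hr hs | q q_pr q_large q_dvd q_new].
- by apply: (v_mod (inl q)); rewrite !mem_cat map_f ?mem_small_primes ?q_pr.
- have p_pr := prime_chain_prime (M + N) (pickle (r, s)).
  have p_gt := prime_chain_gt (M + N) (pickle (r, s)).
  have p_le := leq_self_pexp (prime_gt0 p_pr) b_gt0.
  have := v_mod (inr (r, s)); rewrite /= => /(_ _)/dvdn_congD ->.
    rewrite subnK // (leq_trans _ p_le) //.
    by clear -p_gt hs; rewrite /interior_prime; lia.
  by rewrite !mem_cat map_f ?orbT ?mem_rect_interior ?hr.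
- have qb_notN : (q ^ b %| N) = false.
    apply: gtnNdvd (ltnW N_gt1) (leq_trans _ (leq_self_pexp (prime_gt0 q_pr) b_gt0)).
    by clear -q_large; lia.
  have prod_gt0 : 0 < \prod_(r <- iota 1 M) (u + r).
    rewrite big_seq prodn_cond_gt0 // => r.
    by rewrite mem_iota addn_gt0 => /andP[-> _]; rewrite orbT.
  have qb_v : q ^ b %| v.
    rewrite /dvdn (v_mod (inl q)) /= ?qb_notN ?mod0n //.
    by rewrite mem_cat map_f ?orbT // mem_filter q_new mem_primes q_pr prod_gt0.
  exact: dvdn_trans (dvdn_exp b_gt0 (dvdnn q)) qb_v.
Qed.

Lemma rect_realizable : realizable b (rect_pattern M N).
Proof.
have [u [u_gt0 u_small u_interior]] := exists_u.
have [v [v_gt0 v_small v_interior v_large]] := exists_v u.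
exists u, v; do 2 split=> //.
apply: realizes_rect_of_residues => // [r s hr hs | q r q_pr q_large hr q_ur].
  by exists (interior_prime (r, s)); rewrite ?prime_chain_prime ?u_interior ?v_interior.
have [/mapP[[r' s'] rs_in q_rs] | q_new] :=
  boolP (q \in map interior_prime rect_interior); last first.
  left; apply: v_large => //; apply: dvdn_trans q_ur _.
  by rewrite (big_rem r) ?dvdn_mulr // mem_iota; lia.
move: rs_in; rewrite mem_rect_interior => /andP[hr' hs'].
right; exists r', s'; split=> //; rewrite q_rs ?u_interior //.
exact: dvdn_trans (dvdn_exp b_gt0 (dvdnn _)) (v_interior _ _ hr' hs').
Qed.

End RectangleConstruction.

Theorem mainTheorem9 :
  forall b M N : nat, 1 <= b -> 2 <= M -> 2 <= N ->
    (b = 1 -> (realizable b (rect_pattern M N) <-> odd M /\ odd N)) /\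
    (2 <= b -> (realizable b (rect_pattern M N) <-> odd M \/ N < 2 ^ b)) /\
    (forall K : nat, exists M' N' : nat,
        K <= M' /\ K <= N' /\ 2 <= M' /\ 2 <= N' /\
        realizable b (rect_pattern M' N')).
Proof.
move=> b M N b_gt0 M_gt1 N_gt1; split; [|split].
- move=> b1; subst b; split=> [[u [v [_ [_ realized]]]] | [odd_M odd_N]].
    split; first exact: (realizes_rect_odd_M (b := 1) isT M_gt1 N_gt1 realized).
    exact: realizes_rect1_odd_N M_gt1 N_gt1 realized.
  by apply: rect_realizable; rewrite ?odd_M.
- move=> b_gt1; split=> [[u [v [_ [_ realized]]]] | odd_M_or_N_small].
    have [N_ge | N_small] := leqP (2 ^ b) N; last by right.
    by left; apply: realizes_rect_odd_M realized.
  apply: rect_realizable => // [| b1]; first by case: odd_M_or_N_small => [->|].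
  by rewrite b1 in b_gt1.
- move=> K; exists (2 * K + 3), (2 * K + 3); do 4 (split; first lia).
  by apply: rect_realizable; rewrite ?oddD ?oddM //; lia.
Qed.
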